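(* If $(T_1,T_2,c)\in\mathcal A_2^{\rm sp}$, then $T_1$ is not weakly embeddable in $T_2$; that is, there is no map $f:T_1\to T_2$ such that $x<_{T_1}y$ implies $f(x)<_{T_2}f(y)$.
   Context: For an ordinal $\gamma<\omega_1$, ${\rm ht}(\gamma)$ denotes the unique $\alpha$ with $\gamma\in[\omega\alpha,\omega\alpha+\omega)$. $\mathcal A$ denotes the set of all trees $T$ whose underlying set is $\{\langle\rangle\}\cup X$ for some $X\subseteq\omega_1$, where $\langle\rangle$ is the root (below every other element; considered to be of level $-1$), such that $T$ has height $\omega_1$, has no uncountable branch, is normal (two distinct elements of the same limit level have different sets of predecessors), and for every $\alpha<\omega_1$ the $\alpha$-th level ${\rm lev}_\alpha(T)$ is a subset of $[\omega\alpha,\omega\alpha+\omega)$ (so the tree height of $\gamma\ne\langle\rangle$ equals ${\rm ht}(\gamma)$). For $x,y\in T$, $x\cap_T y$ denotes the $<_T$-greatest element below or equal to both (the meet); $x\perp_T y$ means $x,y$ are $<_T$-incomparable. For $T_1,T_2\in\mathcal A$ and a pair $(x,y)\in{\rm lev}_\alpha(T_1)\times{\rm lev}_\alpha(T_2)$, $\alpha(x,y)$ denotes this $\alpha$. $\mathcal A_2^{\rm sp}$ is the set of all triples $(T_1,T_2,c)$ with $T_1,T_2\in\mathcal A$ and $c$ a function from $\bigcup_{\delta<\omega_1\text{ limit}}{\rm lev}_\delta(T_1)\times{\rm lev}_\delta(T_2)$ to $\omega$ such that whenever $c(x_1,y_1)=c(x_2,y_2)$ and $(x_1,y_1)\neq(x_2,y_2)$,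 then $\alpha(x_1,y_1)\ne\alpha(x_2,y_2)$, $x_1\perp_{T_1}x_2$, $y_1\perp_{T_2}y_2$, and ${\rm ht}(x_1\cap_{T_1}x_2)>{\rm ht}(y_1\cap_{T_2}y_2)$. *)

From Stdlib Require Import Classical.

(* ---------- A model of omega_1 ----------
   O with strict order ltO is (isomorphic to) omega_1 iff ltO is a strict
   well-order, O is uncountable, and every proper initial segment is countable. *)
Definition countable_type (X : Type) : Prop :=
  exists f : X -> nat, forall a b, f a = f b -> a = b.

Definition is_omega1 {O : Type} (ltO : O -> O -> Prop) : Prop :=
  (forall a, ~ ltO a a) /\
  (forall a b c, ltO a b -> ltO b c -> ltO a c) /\
  (forall a b, ltO a b \/ a = b \/ ltO b a) /\
  well_founded ltO /\
  ~ countable_type O /\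
  (forall a, countable_type {b : O | ltO b a}).

Definition is_limit {O : Type} (ltO : O -> O -> Prop) (d : O) : Prop :=
  (exists b, ltO b d) /\ (forall b, ltO b d -> exists g, ltO b g /\ ltO g d).

(* ---------- Nodes ----------
   The countable ordinal omega*alpha + n is encoded as the pair (alpha, n);
   None is the root <>.  So ht (Some (alpha, n)) = alpha. *)
Definition node (O : Type) : Type := option (O * nat).

Definition leT {N : Type} (lt : N -> N -> Prop) (x y : N) : Prop := lt x y \/ x = y.

Definition is_tree_order {N : Type} (mem : N -> Prop) (lt : N -> N -> Prop) : Prop :=
  (forall x y, lt x y -> mem x /\ mem y) /\
  (forall x, ~ lt x x) /\
  (forall x y z, lt x y -> lt y z -> lt x z) /\
  (forall x y z, lt x z -> lt y z -> lt x y \/ x = y \/ lt y x) /\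
  well_founded lt.

Definition level_is {O : Type} (ltO : O -> O -> Prop) (lt : node O -> node O -> Prop)
  (x : node O) (a : O) : Prop :=
  exists f : {y : node O | lt y x /\ y <> None} -> {b : O | ltO b a},
    (forall u, exists v, f v = u) /\
    (forall v w, lt (proj1_sig v) (proj1_sig w) <-> ltO (proj1_sig (f v)) (proj1_sig (f w))).

Definition is_branch {N : Type} (mem : N -> Prop) (lt : N -> N -> Prop) (B : N -> Prop) : Prop :=
  (forall x, B x -> mem x) /\
  (forall x y, B x -> B y -> lt x y \/ x = y \/ lt y x) /\
  (forall z, mem z -> (forall x, B x -> lt x z \/ x = z \/ lt z x) -> B z).

Definition in_A {O : Type} (ltO : O -> O -> Prop)
  (mem : node O -> Prop) (lt : node O -> node O -> Prop) : Prop :=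
  mem None /\
  is_tree_order mem lt /\
  (forall x, mem x -> x <> None -> lt None x) /\
  (* lev_alpha(T) is a subset of [omega alpha, omega alpha + omega) *)
  (forall a n, mem (Some (a, n)) -> level_is ltO lt (Some (a, n)) a) /\
  (* height omega_1: every level is nonempty *)
  (forall a, exists n, mem (Some (a, n))) /\
  (forall B, is_branch mem lt B -> countable_type {x : node O | B x}) /\
  (forall d n m, is_limit ltO d -> mem (Some (d, n)) -> mem (Some (d, m)) -> n <> m ->
     ~ (forall z, lt z (Some (d, n)) <-> lt z (Some (d, m)))).

Definition perp {N : Type} (lt : N -> N -> Prop) (x y : N) : Prop :=
  x <> y /\ ~ lt x y /\ ~ lt y x.

Definition is_meet {N : Type} (lt : N -> N -> Prop) (x y m : N) : Prop :=
  leT lt m x /\ leT lt m y /\ (forall z, leT lt z x -> leT lt z y -> leT lt z m).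

(* ht comparison on nodes, the root having height -1 *)
Definition hgt_lt {O : Type} (ltO : O -> O -> Prop) (a b : node O) : Prop :=
  match a, b with
  | _, None => False
  | None, Some _ => True
  | Some (al, _), Some (be, _) => ltO al be
  end.

(* membership in \mathcal A_2^{sp}; c is only constrained on pairs at a common limit level *)
Definition in_A2sp {O : Type} (ltO : O -> O -> Prop)
  (mem1 : node O -> Prop) (lt1 : node O -> node O -> Prop)
  (mem2 : node O -> Prop) (lt2 : node O -> node O -> Prop)
  (c : O * nat -> O * nat -> nat) : Prop :=
  in_A ltO mem1 lt1 /\ in_A ltO mem2 lt2 /\
  (forall d1 n1 m1 d2 n2 m2,
     is_limit ltO d1 -> is_limit ltO d2 ->
     mem1 (Some (d1, n1)) -> mem2 (Some (d1, m1)) ->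
     mem1 (Some (d2, n2)) -> mem2 (Some (d2, m2)) ->
     c (d1, n1) (d1, m1) = c (d2, n2) (d2, m2) ->
     ((d1, n1), (d1, m1)) <> ((d2, n2), (d2, m2)) ->
     d1 <> d2 /\
     perp lt1 (Some (d1, n1)) (Some (d2, n2)) /\
     perp lt2 (Some (d1, m1)) (Some (d2, m2)) /\
     exists mx my, is_meet lt1 (Some (d1, n1)) (Some (d2, n2)) mx /\
                   is_meet lt2 (Some (d1, m1)) (Some (d2, m2)) my /\
                   hgt_lt ltO my mx).

From Stdlib Require Import Classical ClassicalEpsilon Cantor.

(* Heights strictly increase along a tree order, and a weak embedding f : T1 -> T2 never lowers
   heights.  Countable unions of countable sets being countable, the limits d that are
   closed under the height function of f form an unbounded subset of omega_1; for each
   such d pick x_d on level d of T1 and y_d <= f(x_d) on level d of T2.  Two distinct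
   such d1, d2 receive the same colour c(x_d, y_d), so the meet m of x_d1, x_d2 lies
   strictly below both, with f(m) below level d1 and d2.  Hence f(m) <= y_d1, y_d2, so
   f(m) lies below the meet of y_d1 and y_d2, which by the colouring condition is lower
   than m: f lowers the height of m, a contradiction. *)

Lemma countable_of_enum (X : Type) (e : nat -> X) :
  (forall x, exists k, e k = x) -> countable_type X.
Proof.
  intros He. destruct (choice _ He) as [idx Hidx].
  exists idx. intros x y Hxy. rewrite <- (Hidx x), <- (Hidx y), Hxy. reflexivity.
Qed.

Lemma countable_option_enum (X : Type) :
  countable_type X -> exists e : nat -> option X, forall x, exists k, e k = Some x.
Proof.
  intros [g Hg].
  exists (fun k => match excluded_middle_informative (exists x, g x = k) with
                   | left H => Some (proj1_sig (constructive_indefinite_description _ H))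
                   | right _ => None end).
  intros x. exists (g x).
  destruct (excluded_middle_informative _) as [H|H]; [|exfalso; eauto].
  destruct (constructive_indefinite_description _ H) as [y Hy]; simpl.
  rewrite (Hg _ _ Hy). reflexivity.
Qed.

Lemma meet_lt_of_perp {N : Type} (lt : N -> N -> Prop) (x y m : N) :
  perp lt x y -> is_meet lt x y m -> lt m x /\ lt m y.
Proof.
  intros (Hxy & Hnxy & Hnyx) ([Hmx|<-] & [Hmy|Emy] & _); subst; tauto.
Qed.

Section Omega1.

Context {O : Type} {ltO : O -> O -> Prop}.
Hypothesis HO : is_omega1 ltO.

Let lt_irrefl : forall a, ~ ltO a a := proj1 HO.
Let lt_trans : forall a b c, ltO a b -> ltO b c -> ltO a c := proj1 (proj2 HO).
Let lt_total : forall a b, ltO a b \/ a = b \/ ltO b a := proj1 (proj2 (proj2 HO)).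
Let lt_wf : well_founded ltO := proj1 (proj2 (proj2 (proj2 HO))).
Let uncountable : ~ countable_type O := proj1 (proj2 (proj2 (proj2 (proj2 HO)))).
Let segment_countable : forall a, countable_type {b : O | ltO b a} :=
  proj2 (proj2 (proj2 (proj2 (proj2 HO)))).

Lemma omega1_inhabited : inhabited O.
Proof.
  apply NNPP. intros Hn. apply uncountable.
  exists (fun _ => 0). intros a. exfalso. exact (Hn (inhabits a)).
Qed.

Lemma hgt_lt_irrefl (x : node O) : ~ hgt_lt ltO x x.
Proof. destruct x as [[a n]|]; simpl; auto. Qed.

Lemma hgt_lt_trans (x y z : node O) : hgt_lt ltO x y -> hgt_lt ltO y z -> hgt_lt ltO x z.
Proof. destruct x as [[]|], y as [[]|], z as [[]|]; simpl; eauto; tauto. Qed.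

(* The order type of the segment below [al] is at most that of the segment below [be]. *)
Lemma segment_embedding_not_lt (A : Type) (g1 g2 : A -> O) (al be : O) :
  (forall b, ltO b al -> exists u, g1 u = b) ->
  (forall u v, ltO (g1 u) (g1 v) -> ltO (g2 u) (g2 v)) ->
  (forall u, ltO (g2 u) be) -> ~ ltO be al.
Proof.
  intros Honto Hmono Hbound Hbeal.
  assert (Hnodrop : forall b u, g1 u = b -> ~ ltO (g2 u) b).
  { intros b. induction (lt_wf b) as [b _ IH]. intros u <- Hlt.
    destruct (Honto (g2 u) (lt_trans _ _ _ (Hbound u) Hbeal)) as [v Hv].
    apply (IH (g2 u) Hlt v Hv). apply Hmono. rewrite Hv. exact Hlt. }
  destruct (Honto be Hbeal) as [u Hu]. exact (Hnodrop be u Hu (Hbound u)).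
Qed.

Lemma omega1_enum_le (a : O) : exists e : nat -> O, forall b, leT ltO b a -> exists k, e k = b.
Proof.
  destruct (countable_option_enum _ (segment_countable a)) as [e He].
  exists (fun k => match k with
                   | 0 => a
                   | S k' => match e k' with Some u => proj1_sig u | None => a end end).
  intros b [Hb | ->]; [|now exists 0].
  destruct (He (exist _ b Hb)) as [k Hk]. exists (S k). now rewrite Hk.
Qed.

Lemma omega1_bounded_seq (e : nat -> O) : exists a, forall k, ltO (e k) a.
Proof.
  apply NNPP. intros Hunb.
  assert (Hcover : forall b, exists i, leT ltO b (e i)).
  { intros b. apply NNPP. intros Hn. apply Hunb. exists b. intros i.
    destruct (lt_total (e i) b) as [H|[H|H]]; auto;
      exfalso; apply Hn; exists i; unfold leT; auto. }
  destruct (choice _ omega1_enum_le) as [en Hen].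
  apply uncountable.
  apply (countable_of_enum _ (fun n => let (i, j) := Cantor.of_nat n in en (e i) j)).
  intros b. destruct (Hcover b) as [i Hi]. destruct (Hen (e i) b Hi) as [j Hj].
  exists (Cantor.to_nat (i, j)). rewrite Cantor.cancel_of_to. exact Hj.
Qed.

Lemma omega1_bounded_seq2 (s : nat -> nat -> O) : exists a, forall i j, ltO (s i j) a.
Proof.
  destruct (omega1_bounded_seq (fun n => let (i, j) := Cantor.of_nat n in s i j)) as [a Ha].
  exists a. intros i j. specialize (Ha (Cantor.to_nat (i, j))).
  rewrite Cantor.cancel_of_to in Ha. exact Ha.
Qed.

Lemma omega1_closure_step (F : O -> nat -> O) (a : O) :
  exists a', ltO a a' /\ forall g n, leT ltO g a -> ltO (F g n) a'.
Proof.
  destruct (omega1_enum_le a) as [e He].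
  destruct (omega1_bounded_seq2 (fun i j => match j with 0 => e i | S j' => F (e i) j' end))
    as [a' Ha'].
  exists a'. split.
  - destruct (He a (or_intror eq_refl)) as [i <-]. exact (Ha' i 0).
  - intros g n Hg. destruct (He g Hg) as [i <-]. exact (Ha' i (S n)).
Qed.

Lemma omega1_least (P : O -> Prop) :
  (exists a, P a) -> exists a, P a /\ forall b, ltO b a -> ~ P b.
Proof.
  intros [a Ha]. apply NNPP. intros Hn. revert Ha. induction (lt_wf a) as [a _ IH].
  intros Ha. apply Hn. exists a. split; [exact Ha|]. intros b Hb Pb. exact (IH b Hb Pb).
Qed.

Lemma omega1_closed_limit_above (F : O -> nat -> O) (a0 : O) :
  exists d, ltO a0 d /\ is_limit ltO d /\ forall g n, ltO g d -> ltO (F g n) d.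
Proof.
  destruct (choice _ (omega1_closure_step F)) as [next Hnext].
  set (sq := fun k => Nat.iter k next a0).
  assert (Hsq : forall k, ltO (sq k) (sq (S k))) by (intros k; apply Hnext).
  destruct (omega1_bounded_seq sq) as [ub Hub].
  destruct (omega1_least (fun d => forall k, ltO (sq k) d) (ex_intro _ ub Hub))
    as [d [Hd Hleast]].
  assert (Hbelow : forall b, ltO b d -> exists k, leT ltO b (sq k)).
  { intros b Hb. apply NNPP. intros Hn. apply (Hleast b Hb). intros k.
    destruct (lt_total (sq k) b) as [H|[H|H]]; auto;
      exfalso; apply Hn; exists k; unfold leT; auto. }
  exists d. split; [exact (Hd 0)|]. split; [split|].
  - exists a0. exact (Hd 0).
  - intros b Hb. destruct (Hbelow b Hb) as [k [H | ->]].
    + exists (sq (S k)). split; [exact (lt_trans _ _ _ H (Hsq k))|apply Hd].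
    + exists (sq (S k)). split; [apply Hsq|apply Hd].
  - intros g n Hg. destruct (Hbelow g Hg) as [k Hk].
    apply (lt_trans _ (sq (S k))); [exact (proj2 (Hnext (sq k)) g n Hk)|apply Hd].
Qed.

Lemma omega1_pigeonhole (P : O -> Prop) (Q : O -> nat -> Prop) :
  (forall a, exists d, ltO a d /\ P d) -> (forall d, P d -> exists k, Q d k) ->
  exists d1 d2 k, d1 <> d2 /\ P d1 /\ P d2 /\ Q d1 k /\ Q d2 k.
Proof.
  intros Hunb HQ. apply NNPP. intros Hinj.
  destruct omega1_inhabited as [o].
  assert (Hrep : forall k, exists d, (exists d', P d' /\ Q d' k) -> P d /\ Q d k).
  { intros k. destruct (classic (exists d', P d' /\ Q d' k)) as [[d' Hd']|H].
    - exists d'. auto.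
    - exists o. tauto. }
  destruct (choice _ Hrep) as [rep Hrep'].
  destruct (omega1_bounded_seq rep) as [a Ha].
  destruct (Hunb a) as [d [Had Pd]]. destruct (HQ d Pd) as [k Qdk].
  destruct (Hrep' k (ex_intro _ d (conj Pd Qdk))) as [Prep Qrep].
  destruct (classic (rep k = d)) as [E|E].
  - apply (lt_irrefl d). rewrite <- E at 1. exact (lt_trans _ _ _ (Ha k) Had).
  - apply Hinj. exists (rep k), d, k. auto.
Qed.

End Omega1.

Section Tree.

Context {O : Type} {ltO : O -> O -> Prop}.
Hypothesis HO : is_omega1 ltO.
Context {mem : node O -> Prop} {lt : node O -> node O -> Prop}.
Hypothesis HA : in_A ltO mem lt.

Let lt_trans : forall a b c, ltO a b -> ltO b c -> ltO a c := proj1 (proj2 HO).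
Let lt_total : forall a b, ltO a b \/ a = b \/ ltO b a := proj1 (proj2 (proj2 HO)).

Lemma not_lt_root (z : node O) : ~ lt z None.
Proof.
  destruct HA as (_ & (Tmem & Tirr & Ttrans & _) & Troot & _).
  intros Hz. destruct z as [z|]; [|exact (Tirr None Hz)].
  apply (Tirr None). apply (Ttrans _ _ _ (Troot _ (proj1 (Tmem _ _ Hz)) ltac:(discriminate)) Hz).
Qed.

(* [L] maps the predecessors of [z] onto the segment below [L z], and the level map of
   [z] maps them onto the segment below [g]; compare the two with
   [segment_embedding_not_lt] in both directions. *)
Lemma level_map_rank (w : node O) (be : O)
  (L : {y | lt y w /\ y <> None} -> {b | ltO b be})
  (HLonto : forall u, exists v, L v = u)
  (HL : forall v v', lt (proj1_sig v) (proj1_sig v') <-> ltO (proj1_sig (L v)) (proj1_sig (L v')))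
  (g : O) (n : nat) (p : lt (Some (g, n)) w /\ Some (g, n) <> None) :
  proj1_sig (L (exist _ _ p)) = g.
Proof.
  destruct HA as (_ & (Tmem & _ & Ttrans & _) & _ & Tlev & _).
  set (z := Some (g, n)) in *. set (r := proj1_sig (L (exist _ z p))).
  destruct (Tlev g n (proj1 (Tmem _ _ (proj1 p)))) as [Lz [HLzonto HLz]].
  destruct (lt_total g r) as [Hgr|[Hgr|Hrg]]; [exfalso| exact (eq_sym Hgr) | exfalso].
  - apply (segment_embedding_not_lt HO {v : {y | lt y w /\ y <> None} | lt (proj1_sig v) z}
      (fun u => proj1_sig (L (proj1_sig u)))
      (fun u => proj1_sig (Lz (exist _ (proj1_sig (proj1_sig u))
                                 (conj (proj2_sig u) (proj2 (proj2_sig (proj1_sig u))))))) r g);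
      [| | intros u; exact (proj2_sig (Lz _)) | exact Hgr].
    + intros b Hb. destruct (HLonto (exist _ b (lt_trans _ _ _ Hb (proj2_sig (L _)))))
        as [v Hv].
      assert (Hvz : lt (proj1_sig v) z) by (apply (HL v (exist _ z p)); rewrite Hv; exact Hb).
      exists (exist _ v Hvz). simpl. rewrite Hv. reflexivity.
    + intros u v Huv. apply HLz. simpl. apply HL. exact Huv.
  - apply (segment_embedding_not_lt HO {y | lt y z /\ y <> None}
      (fun u => proj1_sig (Lz u))
      (fun u => proj1_sig (L (exist _ (proj1_sig u)
                                (conj (Ttrans _ _ _ (proj1 (proj2_sig u)) (proj1 p))
                                      (proj2 (proj2_sig u)))))) g r);
      [| | | exact Hrg].
    + intros b Hb. destruct (HLzonto (exist _ b Hb)) as [v Hv]. exists v. rewrite Hv. reflexivity.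
    + intros u v Huv. apply HL. simpl. apply HLz. exact Huv.
    + intros u. apply (HL (exist _ _ _) (exist _ z p)). exact (proj1 (proj2_sig u)).
Qed.

Lemma lt_hgt_lt (x y : node O) : lt x y -> hgt_lt ltO x y.
Proof.
  intros Hxy. pose proof HA as (_ & (Tmem & _) & _ & Tlev & _).
  destruct y as [[be k]|]; [|destruct (not_lt_root x Hxy)].
  destruct x as [[g n]|]; [|exact I].
  destruct (Tlev be k (proj2 (Tmem _ _ Hxy))) as [L [HLonto HL]].
  assert (p : lt (Some (g, n)) (Some (be, k)) /\ Some (g, n) <> None)
    by (split; [exact Hxy|discriminate]).
  simpl. rewrite <- (level_map_rank _ _ L HLonto HL g n p). exact (proj2_sig (L _)).
Qed.

Lemma exists_pred_at_level (be : O) (k : nat) (d : O) :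
  mem (Some (be, k)) -> ltO d be -> exists m, lt (Some (d, m)) (Some (be, k)).
Proof.
  intros Hw Hd. pose proof HA as (_ & _ & _ & Tlev & _).
  destruct (Tlev be k Hw) as [L [HLonto HL]].
  destruct (HLonto (exist _ d Hd)) as [[[[g m]|] p] Hv]; [|now destruct (proj2 p)].
  exists m. pose proof (level_map_rank _ _ L HLonto HL g m p) as Hg.
  rewrite Hv in Hg. simpl in Hg. subst g. exact (proj1 p).
Qed.

Lemma hgt_lt_le_trans (x y z : node O) :
  leT lt x y -> hgt_lt ltO y z -> hgt_lt ltO x z.
Proof.
  intros [Hxy| ->]; [|exact id].
  apply hgt_lt_trans; [exact HO|]. exact (lt_hgt_lt _ _ Hxy).
Qed.

Lemma lt_of_lt_of_le_hgt (u y w : node O) :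
  lt u w -> leT lt y w -> hgt_lt ltO u y -> lt u y.
Proof.
  pose proof HA as (_ & (_ & _ & _ & Tcmp & _) & _).
  intros Huw [Hyw| ->] Hh; [|exact Huw].
  destruct (Tcmp _ _ _ Huw Hyw) as [H|[->|H]]; [exact H|..]; exfalso.
  - exact (hgt_lt_irrefl HO _ Hh).
  - exact (hgt_lt_irrefl HO _ (hgt_lt_trans HO _ _ _ (lt_hgt_lt _ _ H) Hh)).
Qed.

End Tree.

Section WeakEmbedding.

Context {O : Type} {ltO : O -> O -> Prop}.
Hypothesis HO : is_omega1 ltO.
Context {mem1 : node O -> Prop} {lt1 : node O -> node O -> Prop}.
Context {mem2 : node O -> Prop} {lt2 : node O -> node O -> Prop}.
Hypotheses (HA1 : in_A ltO mem1 lt1) (HA2 : in_A ltO mem2 lt2).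
Variable f : node O -> node O.
Hypothesis Hfmem : forall x, mem1 x -> mem2 (f x).
Hypothesis Hflt : forall x y, lt1 x y -> lt2 (f x) (f y).

Lemma embedding_not_root (x : node O) : mem1 x -> x <> None -> f x <> None.
Proof.
  intros Hx Hn E. pose proof HA1 as (_ & _ & Troot & _).
  pose proof (Hflt _ _ (Troot x Hx Hn)) as H. rewrite E in H. exact (not_lt_root HA2 _ H).
Qed.

Lemma embedding_not_hgt_lt (x : node O) : mem1 x -> ~ hgt_lt ltO (f x) x.
Proof.
  intros Hx. destruct x as [[al n]|]; [|now destruct (f None) as [[]|]].
  pose proof HA1 as (_ & (Tmem1 & _) & _ & Tlev1 & _).
  pose proof HA2 as (_ & _ & _ & Tlev2 & _).
  destruct (f (Some (al, n))) as [[be k]|] eqn:Ef;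
    [|exfalso; exact (embedding_not_root _ Hx ltac:(discriminate) Ef)].
  destruct (Tlev1 al n Hx) as [L1 [HL1onto HL1]].
  assert (Hfx : mem2 (Some (be, k))) by (rewrite <- Ef; exact (Hfmem _ Hx)).
  destruct (Tlev2 be k Hfx) as [L2 [_ HL2]].
  assert (pf : forall u : {y | lt1 y (Some (al, n)) /\ y <> None},
             lt2 (f (proj1_sig u)) (Some (be, k)) /\ f (proj1_sig u) <> None).
  { intros [y [Hy Hyn]]. simpl. split.
    - rewrite <- Ef. exact (Hflt _ _ Hy).
    - exact (embedding_not_root y (proj1 (Tmem1 _ _ Hy)) Hyn). }
  apply (segment_embedding_not_lt HO _ (fun u => proj1_sig (L1 u))
           (fun u => proj1_sig (L2 (exist _ (f (proj1_sig u)) (pf u))))).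
  - intros b Hb. destruct (HL1onto (exist _ b Hb)) as [v Hv]. exists v. now rewrite Hv.
  - intros u v Huv. apply HL2. simpl. apply Hflt. apply HL1. exact Huv.
  - intros u. exact (proj2_sig (L2 _)).
Qed.

Lemma embedding_meets_level (d : O) (n : nat) :
  mem1 (Some (d, n)) -> exists m, mem2 (Some (d, m)) /\ leT lt2 (Some (d, m)) (f (Some (d, n))).
Proof.
  intros Hx. pose proof HA2 as (_ & (Tmem2 & _) & _).
  pose proof (embedding_not_hgt_lt _ Hx) as Hh. pose proof (Hfmem _ Hx) as Hfx.
  destruct (f (Some (d, n))) as [[be k]|] eqn:Ef;
    [|exfalso; exact (embedding_not_root _ Hx ltac:(discriminate) Ef)].
  simpl in Hh. destruct (proj1 (proj2 (proj2 HO)) d be) as [Hdb|[<-|Hbd]].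
  - destruct (exists_pred_at_level HO HA2 be k d Hfx Hdb) as [m Hm].
    exists m. split; [exact (proj1 (Tmem2 _ _ Hm))|left; exact Hm].
  - exists k. split; [exact Hfx|right; reflexivity].
  - contradiction.
Qed.

End WeakEmbedding.

Theorem claim3p4 (O : Type) (ltO : O -> O -> Prop) (HO : is_omega1 ltO)
  (mem1 : node O -> Prop) (lt1 : node O -> node O -> Prop)
  (mem2 : node O -> Prop) (lt2 : node O -> node O -> Prop)
  (c : O * nat -> O * nat -> nat)
  (Hsp : in_A2sp ltO mem1 lt1 mem2 lt2 c) :
  ~ exists f : node O -> node O,
      (forall x, mem1 x -> mem2 (f x)) /\
      (forall x y, lt1 x y -> lt2 (f x) (f y)).
Proof.
  intros [f [Hfmem Hflt]]. destruct Hsp as (HA1 & HA2 & Hc).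
  pose proof HA1 as (_ & (Tmem1 & _) & _ & _ & Tne1 & _).
  set (F := fun g n => match f (Some (g, n)) with Some (b, _) => b | None => g end).
  set (Closed := fun d => is_limit ltO d /\ forall g n, ltO g d -> ltO (F g n) d).
  destruct (omega1_pigeonhole HO Closed (fun d k => exists n m,
      mem1 (Some (d, n)) /\ mem2 (Some (d, m)) /\
      leT lt2 (Some (d, m)) (f (Some (d, n))) /\ c (d, n) (d, m) = k))
    as (d1 & d2 & k & Hd12 & Hcl1 & Hcl2 & (n1 & m1 & Hx1 & Hy1 & Hle1 & Hc1)
                                         & (n2 & m2 & Hx2 & Hy2 & Hle2 & Hc2)).
  { intros a. exact (omega1_closed_limit_above HO F a). }
  { intros d _. destruct (Tne1 d) as [n Hn].
    destruct (embedding_meets_level HO HA1 HA2 f Hfmem Hflt d n Hn) as [m [Hm Hle]].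
    eauto 7. }
  destruct (Hc d1 n1 m1 d2 n2 m2 (proj1 Hcl1) (proj1 Hcl2) Hx1 Hy1 Hx2 Hy2
              ltac:(congruence) ltac:(congruence))
    as (_ & Hperp1 & _ & mx & my & Hmx & Hmy & Hh).
  destruct (meet_lt_of_perp _ _ _ _ Hperp1 Hmx) as [Hmx1 Hmx2].
  destruct mx as [[al q]|]; [|now destruct my as [[]|]].
  (* f(mx) lies below level d of T2, hence below y_d <= f(x_d). *)
  assert (Hbelow : forall d n m, Closed d -> lt1 (Some (al, q)) (Some (d, n)) ->
             leT lt2 (Some (d, m)) (f (Some (d, n))) -> leT lt2 (f (Some (al, q))) (Some (d, m))).
  { intros d n m [_ Hcl] Hlt Hle. left.
    apply (lt_of_lt_of_le_hgt HO HA2 _ _ (f (Some (d, n)))); [exact (Hflt _ _ Hlt)|exact Hle|].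
    pose proof (Hcl al q (lt_hgt_lt HO HA1 _ _ Hlt)) as Hb. unfold F in Hb.
    destruct (f (Some (al, q))) as [[be kk]|]; [exact Hb|exact I]. }
  apply (embedding_not_hgt_lt HO HA1 HA2 f Hfmem Hflt _ (proj1 (Tmem1 _ _ Hmx1))).
  apply (hgt_lt_le_trans HO HA2 _ my); [|exact Hh].
  apply Hmy; eauto.
Qed.
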